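(* Let $m$ be an element of the monoid $M$. Then $m$ is the skeleton of some finite $(3+1)$-free poset if and only if (i) every representative $w\in\Sigma^*$ of $m$ starts with the letter $c_1$ or $t_{12}$, and (ii) no representative $w\in\Sigma^*$ of $m$ contains a factor (consecutive pair of letters) of the form $c_ic_i$ for some $i\ge1$.
   Context: A poset $P$ is $(3+1)$-free if there are no $a,b,c,d\in P$ with $a<b<c$ and $d$ incomparable to each of $a,b,c$. For $a\in P$ let $D_a=\{x\in P:x<a\}$, $U_a=\{x\in P:x>a\}$. Write $a\mathrel{\top}b$ if neither of $D_a,D_b$ contains the other, $a\mathrel{\bot}b$ if neither of $U_a,U_b$ contains the other, and $a\approx b$ if $D_a=D_b$ and $U_a=U_b$. A top of a tangle is a subset $A\subseteq P$ with $|A|\ge2$ that is a connected component of the graph on $P$ with edges $\{a,b\}$ for $a\mathrel{\top}b$; a bottom of a tangle is defined likewise using $\bot$. A top $A$ and bottom $B$ are matched if there are distinct $a_1,a_2\in A$, $b_1,b_2\in B$ with $b_1<a_1$, $b_2<a_2$ and the pairs $\{a_1,a_2\},\{b_1,b_2\},\{b_1,a_2\},\{b_2,a_1\}$ incomparable; in a $(3+1)$-free poset this is a perfect matching. A tangle is a matched pair $(A,B)$, identified with $A\cup B$; a clone set is an equivalence class of $\approx$ on the vertices in no tangle; clone sets and tangles are the parts of $P$. Levels: $L_1$ = minimal elements of $P$, $L_{k+1}$ = minimal elements of $P\setminus(L_1\cup\dots\cup L_k)$, $\ell(a)=k$ if $a\in L_k$; each clone set lies in one level, each tangle in $L_i\cup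 L_{i+1}$ for some $i$. A compatible listing is an ordering $(X_1,\dots,X_m)$ of all parts such that for $a\in X_i$, $b\in X_j$, $i\ne j$: $a<b$ iff $\ell(a)\le\ell(b)-2$, or $\ell(a)=\ell(b)-1$ and $i<j$ (compatible listings exist). Let $\Sigma=\{c_1,c_2,\dots\}\cup\{t_{12},t_{23},\dots,t_{i\,i+1},\dots\}$, $\Sigma^*$ the free monoid on $\Sigma$, and $M$ the quotient of $\Sigma^*$ by the commutation relations $c_ic_j=c_jc_i$ if $|i-j|\ge2$; $c_it_{j\,j+1}=t_{j\,j+1}c_i$ if $i\le j-2$ or $i\ge j+3$; $t_{i\,i+1}t_{j\,j+1}=t_{j\,j+1}t_{i\,i+1}$ if $|i-j|\ge3$. A representative of $m\in M$ is a word in $\Sigma^*$ mapping to $m$. The word of a compatible listing replaces each clone set at level $i$ by $c_i$ and each tangle in levels $\{i,i+1\}$ by $t_{i\,i+1}$; all compatible listings of $P$ give words with the same image in $M$, the skeleton of $P$. *)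

From Stdlib Require Import Relation_Operators.
From mathcomp Require Import all_boot.
Set Implicit Arguments. Unset Strict Implicit. Unset Printing Implicit Defensive.

(* Lc i = c_i, Lt i = t_{i,i+1}; genuine letters have index i >= 1. *)
Inductive letter := Lc of nat | Lt of nat.

Definition letter_index (a : letter) : nat := match a with Lc i => i | Lt i => i end.
Definition valid_letter (a : letter) : bool := 1 <= letter_index a.

Definition commute_letters (a b : letter) : bool :=
  match a, b with
  | Lc i, Lc j => (i + 2 <= j) || (j + 2 <= i)
  | Lc i, Lt j => (i + 2 <= j) || (j + 3 <= i)
  | Lt j, Lc i => (i + 2 <= j) || (j + 3 <= i)
  | Lt i, Lt j => (i + 3 <= j) || (j + 3 <= i)
  end.

Definition swap_step (w w' : seq letter) : Prop :=
  exists (u v : seq letter) (a b : letter),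
    commute_letters a b /\ w = u ++ a :: b :: v /\ w' = u ++ b :: a :: v.

(* two words have the same image in M (congruence generated by the relations) *)
Definition word_equiv : seq letter -> seq letter -> Prop :=
  clos_refl_sym_trans (seq letter) swap_step.

Definition starts_c1_or_t12 (w : seq letter) : Prop :=
  match w with
  | Lc 1 :: _ => True
  | Lt 1 :: _ => True
  | _ => False
  end.

Definition has_factor_cici (w : seq letter) : Prop :=
  exists (u v : seq letter) (i : nat), w = u ++ Lc i :: Lc i :: v.

Section Poset.
Variables (T : finType) (lt : rel T).

Definition strict_order : Prop :=
  (forall x, ~~ lt x x) /\ (forall x y z, lt x y -> lt y z -> lt x z).

Definition incomp (a b : T) : bool := [&& a != b, ~~ lt a b & ~~ lt b a].

Definition free31 : Prop :=
  ~ exists a b c d : T,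
      [/\ lt a b, lt b c, incomp d a, incomp d b & incomp d c].

Definition Dn (a : T) : {set T} := [set x | lt x a].
Definition Up (a : T) : {set T} := [set x | lt a x].

Definition top_rel (a b : T) : bool := ~~ (Dn a \subset Dn b) && ~~ (Dn b \subset Dn a).
Definition bot_rel (a b : T) : bool := ~~ (Up a \subset Up b) && ~~ (Up b \subset Up a).
Definition clone (a b : T) : bool := (Dn a == Dn b) && (Up a == Up b).

Definition is_top (A : {set T}) : bool :=
  (1 < #|A|) && [exists a, A == [set x | connect top_rel a x]].
Definition is_bot (B : {set T}) : bool :=
  (1 < #|B|) && [exists b, B == [set x | connect bot_rel b x]].

Definition matched (A B : {set T}) : bool :=
  [exists a1, exists a2, exists b1, exists b2,
    [&& a1 \in A, a2 \in A, b1 \in B, b2 \in B, a1 != a2, b1 != b2,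
        lt b1 a1, lt b2 a2, incomp a1 a2, incomp b1 b2, incomp b1 a2 & incomp b2 a1]].

(* a tangle, identified with A :|: B *)
Definition is_tangle (X : {set T}) : bool :=
  [exists A : {set T}, exists B : {set T},
     [&& is_top A, is_bot B, matched A B & X == A :|: B]].

Definition in_tangle (x : T) : bool := [exists X, is_tangle X && (x \in X)].

Definition is_clone_set (X : {set T}) : bool :=
  [exists x, ~~ in_tangle x && (X == [set y | ~~ in_tangle y && clone x y])].

Definition is_part (X : {set T}) : bool := is_tangle X || is_clone_set X.

(* levels: used k = L_1 u ... u L_k *)
Fixpoint used (k : nat) : {set T} :=
  match k with
  | 0 => set0
  | k'.+1 => let R := ~: used k' in
             used k' :|: [set x in R | [forall y in R, ~~ lt y x]]
  end.

Definition Lev (k : nat) : {set T} := used k :\: used k.-1.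

Definition level (a : T) : nat := find (fun k => a \in used k) (iota 0 #|T|.+1).

(* the letter of a part: c_i for a clone set at level i,
   t_{i,i+1} for a tangle in levels {i,i+1} (i = least level in the part) *)
Definition part_letter (X : {set T}) : letter :=
  let i := \big[minn/#|T|.+1]_(x in X) level x in
  if is_tangle X then Lt i else Lc i.

Definition compatible_listing (s : seq {set T}) : Prop :=
  [/\ uniq s,
      (forall X, (X \in s) = is_part X) &
      forall (i j : nat) (a b : T), i < size s -> j < size s -> i != j ->
        a \in nth set0 s i -> b \in nth set0 s j ->
        lt a b = (level a + 2 <= level b) || ((level a + 1 == level b) && (i < j))].

(* the skeleton of the poset is the element of M represented by w *)
Definition skeleton_is (w : seq letter) : Prop :=
  exists s, compatible_listing s /\ word_equiv (map part_letter s) w.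

End Poset.

(* In a (3+1)-free poset, x < y as soon as the level of y exceeds that of x
   by two, so every part lies in one level or in two consecutive ones and a
   compatible listing only decides comparisons between adjacent levels.  Read
   as a word, a listing therefore has two properties: a letter commuting with
   everything before it is a part with nothing below it, hence at level 1;
   and two clone sets at level i separated only by commuting letters would
   have the same down-sets and up-sets, hence be the same part.  Both
   properties survive commutations and imply the two conditions on every
   representative.  Conversely, given such a word we take four vertices per
   letter (a clone set for c_i, a matched 2+2 tangle for t_{i,i+1}) and order
   them by level and, between adjacent levels, by position; the two properties
   make the levels, tangles and clone sets of this poset exactly the ones
   encoded by the word. *)

From Stdlib Require Import Relation_Operators Lia.
From mathcomp Require Import all_boot zify.
Set Implicit Arguments. Unset Strict Implicit. Unset Printing Implicit Defensive.

(** * Levels of a finite poset *)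

Section Levels.
Variables (T : finType) (lt : rel T).
Hypothesis lt_order : strict_order lt.

Lemma lt_irrefl x : lt x x = false.
Proof. by case: lt_order => irr _; apply/negbTE/irr. Qed.

Lemma lt_trans x y z : lt x y -> lt y z -> lt x z.
Proof. by case: lt_order => _; apply. Qed.

Lemma mem_usedS k x :
  (x \in used lt k.+1) = (x \in used lt k) || [forall y, lt y x ==> (y \in used lt k)].
Proof.
rewrite /= inE; case: (boolP (x \in used lt k)) => //= xk.
rewrite inE in_setC xk /=; apply/forall_inP/forallP => below y.
- by apply/implyP => yx; apply/negPn/negP => yk; move: (below y); rewrite in_setC yk yx => /(_ isT).
- by rewrite in_setC => yk; apply/negP => yx; move: (below y); rewrite yx (negbTE yk).
Qed.

Lemma subset_used k m : k <= m -> used lt k \subset used lt m.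
Proof.
move=> /subnK <-; elim: (m - k) => [|d IH]; first by rewrite add0n.
by apply: subset_trans IH _; apply/subsetP => x xk; rewrite addSn mem_usedS xk.
Qed.

Lemma exists_minimal (S : {set T}) :
  S != set0 -> exists2 x, x \in S & forall y, y \in S -> ~~ lt y x.
Proof.
case/set0Pn => x0 Sx0.
case: (@arg_minnP _ x0 (mem S) (fun x => #|Dn lt x|) Sx0) => x Sx xmin.
exists x => // y Sy; apply/negP => yx.
have := xmin y Sy; rewrite leqNgt => /negP; apply.
apply: proper_card; rewrite properE; apply/andP; split.
- by apply/subsetP => z; rewrite !inE => zy; apply: lt_trans zy yx.
- by apply/subsetPn; exists y; rewrite !inE ?lt_irrefl.
Qed.

Lemma card_used k : minn k #|T| <= #|used lt k|.
Proof.
elim: k => [|k IH]; first by rewrite min0n.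
case: (boolP (used lt k == setT)) => [/eqP full|notfull].
  have : used lt k \subset used lt k.+1 by apply: subset_used.
  by rewrite full subTset => /eqP ->; rewrite cardsT geq_minr.
have : ~: used lt k != set0.
  by apply: contra notfull => /eqP empty; rewrite -[used lt k]setCK empty setC0.
case/exists_minimal => x; rewrite in_setC => xk xmin.
have grow : used lt k \proper used lt k.+1.
  rewrite properE subset_used //=; apply/subsetPn; exists x => //.
  rewrite mem_usedS; apply/orP; right; apply/forallP => y; apply/implyP => yx.
  by apply/negPn/negP => yk; move: (xmin y); rewrite in_setC yk yx => /(_ isT).
have := proper_card grow; have := max_card (mem (used lt k.+1)); lia.
Qed.

Lemma mem_used_card x : x \in used lt #|T|.
Proof.
have : used lt #|T| = setT.
  by apply/eqP; rewrite eqEcard subsetT cardsT; have := card_used #|T|; rewrite minnn.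
by move->; rewrite inE.
Qed.

Lemma level_spec x : [/\ x \in used lt (level lt x), level lt x <= #|T| &
   forall k, k < level lt x -> x \notin used lt k].
Proof.
have has_used : has (fun k => x \in used lt k) (iota 0 #|T|.+1).
  by apply/hasP; exists #|T|; rewrite ?mem_used_card // mem_iota add0n ltnS leqnn.
have lvl_lt : level lt x < #|T|.+1 by move: (has_used); rewrite has_find size_iota.
split => //.
- by have := nth_find 0 has_used; rewrite nth_iota // add0n.
- move=> k lt_k; have := before_find 0 lt_k; rewrite nth_iota ?add0n => [->//|].
  exact: ltn_trans lt_k lvl_lt.
Qed.

Lemma mem_used x k : (x \in used lt k) = (level lt x <= k).
Proof.
case: (level_spec x) => x_lvl _ below; apply/idP/idP.
- by move=> xk; rewrite leqNgt; apply/negP => /below; rewrite xk.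
- by move=> le_k; apply: (subsetP (subset_used le_k)).
Qed.

Lemma level_gt0 x : 0 < level lt x.
Proof. by case: (level_spec x) => + _ _; rewrite lt0n; apply: contraTN => /eqP->; rewrite inE. Qed.

Lemma level_le_card x : level lt x <= #|T|.
Proof. by case: (level_spec x). Qed.

Lemma level_lt y x : lt y x -> level lt y < level lt x.
Proof.
move=> yx; have x_gt0 := level_gt0 x.
have : x \in used lt (level lt x).-1.+1 by rewrite prednK // mem_used.
rewrite mem_usedS mem_used; have -> : (level lt x <= (level lt x).-1) = false by lia.
by move=> /= /forallP /(_ y); rewrite yx /= mem_used; lia.
Qed.

Lemma exists_lt_level_pred x :
  1 < level lt x -> exists2 y, lt y x & level lt y = (level lt x).-1.
Proof.
move=> lvl_x.
have : x \notin used lt (level lt x).-2.+1 by rewrite mem_used; lia.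
rewrite mem_usedS negb_or => /andP [_ /forallPn [y]].
rewrite negb_imply mem_used => /andP [yx lvl_y].
by exists y => //; have := level_lt yx; lia.
Qed.

Lemma level_eq_Dn x y : Dn lt x = Dn lt y -> level lt x = level lt y.
Proof.
move=> eqD; suff used_eq k : (x \in used lt k) = (y \in used lt k).
  apply/eqP; rewrite eqn_leq -!mem_used; apply/andP.
  by split; [rewrite used_eq | rewrite -used_eq]; rewrite mem_used.
elim: k => [|k IH]; first by rewrite !inE.
rewrite !mem_usedS IH; congr (_ || _); apply: eq_forallb => z.
by have := congr1 (fun S : {set T} => z \in S) eqD; rewrite !inE => ->.
Qed.

Lemma big_min_level (X : {set T}) x0 :
  x0 \in X -> (forall x, x \in X -> level lt x0 <= level lt x) ->
  \big[minn/#|T|.+1]_(x in X) level lt x = level lt x0.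
Proof.
move=> Xx0 x0min; apply/eqP; rewrite eqn_leq; apply/andP; split.
- rewrite -big_filter.
  have : x0 \in [seq x <- index_enum T | x \in X] by rewrite mem_filter Xx0 mem_index_enum.
  elim: [seq x <- index_enum T | x \in X] => // y s IH; rewrite inE big_cons.
  by case/orP => [/eqP <-|/IH]; [apply: geq_minl | apply: leq_trans (geq_minr _ _)].
- apply: (big_ind (fun m => level lt x0 <= m)) => //.
  + exact: ltnW (leq_ltn_trans (level_le_card x0) (ltnSn _)).
  + by move=> m1 m2 h1 h2; rewrite leq_min h1 h2.
Qed.

End Levels.

(** * Levels in (3+1)-free posets *)

Section ThreeOneFree.
Variables (T : finType) (lt : rel T).
Hypotheses (lt_order : strict_order lt) (lt_free : free31 lt).
Local Notation level := (level lt).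

(* A chain y < x < b with a outside it would be a 3+1, since level
   differences forbid a from being comparable to any of y, x, b. *)
Lemma lt_of_level_gap a b : level a + 2 <= level b -> lt a b.
Proof.
move: {2}(level b) (leqnn (level b)) => n; elim: n a b => [|n IH] a b lvl_b gap; first lia.
have a_gt0 := level_gt0 lt_order a.
have [x xb lvl_x] : exists2 x, lt x b & level x = (level b).-1.
  by apply: (exists_lt_level_pred lt_order); lia.
case: (leqP (level a + 2) (level x)) => [gap_x | near_x].
  have ax : lt a x by apply: IH gap_x; lia.
  exact: (lt_trans lt_order ax xb).
have [y yx lvl_y] : exists2 y, lt y x & level y = (level x).-1.
  by apply: (exists_lt_level_pred lt_order); lia.
have [->|ay] := eqVneq a y; first exact: (lt_trans lt_order yx xb).
apply/negPn/negP => ab; case: lt_free; exists y, x, b, a.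
have ax : ~~ lt a x by apply: contra ab => /(lt_trans lt_order)/(_ xb).
have not_lt u v : level v <= level u -> ~~ lt u v.
  by move=> le_vu; apply/negP => /(level_lt lt_order); lia.
split => //; apply/and3P; split => //; try (by apply: not_lt; lia);
  by apply/eqP => eq_a; move: gap near_x; rewrite eq_a; lia.
Qed.

Lemma level_le_of_not_subset_Dn a b : ~~ (Dn lt a \subset Dn lt b) -> level b <= level a.
Proof.
case/subsetPn => x; rewrite !inE => xa xb; have := level_lt lt_order xa.
by case: (leqP (level x + 2) (level b)) => [/lt_of_level_gap|]; [rewrite (negbTE xb) | lia].
Qed.

Lemma level_le_of_not_subset_Up a b : ~~ (Up lt a \subset Up lt b) -> level a <= level b.
Proof.
case/subsetPn => x; rewrite !inE => ax bx; have := level_lt lt_order ax.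
by case: (leqP (level b + 2) (level x)) => [/lt_of_level_gap|]; [rewrite (negbTE bx) | lia].
Qed.

Lemma level_top_rel a b : top_rel lt a b -> level a = level b.
Proof. by case/andP => /level_le_of_not_subset_Dn ? /level_le_of_not_subset_Dn ?; lia. Qed.

Lemma level_bot_rel a b : bot_rel lt a b -> level a = level b.
Proof. by case/andP => /level_le_of_not_subset_Up ? /level_le_of_not_subset_Up ?; lia. Qed.

Lemma level_connect (e : rel T) a x :
  (forall u v, e u v -> level u = level v) -> connect e a x -> level a = level x.
Proof.
move=> e_level /connectP [p + ->]; elim: p a => [|y p IHp] a //= /andP [ay yp].
by rewrite (e_level _ _ ay) (IHp _ yp).
Qed.

Lemma tangle_levels X : is_tangle lt X -> exists l,
  [/\ forall x, x \in X -> l <= level x <= l.+1 & exists2 x, x \in X & level x = l].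
Proof.
case/existsP => A /existsP [B /and4P [topA botB match_AB /eqP ->]].
case/andP: topA => _ /existsP [a /eqP defA]; case/andP: botB => _ /existsP [b /eqP defB].
have levelA x : x \in A -> level x = level a.
  by rewrite defA inE => /(level_connect level_top_rel) ->.
have levelB x : x \in B -> level x = level b.
  by rewrite defB inE => /(level_connect level_bot_rel) ->.
case/existsP: match_AB => a1 /existsP [a2 /existsP [b1 /existsP [b2]]].
case/and4P => Aa1 Aa2 Bb1 /and4P [_ _ _ /and4P [b1a1 _ _ /and3P [_ b1a2 _]]].
have lvl_a1 := level_lt lt_order b1a1.
have lvl_a2 : level a2 < level b1 + 2.
  by rewrite ltnNge; apply: contraL b1a2 => /lt_of_level_gap b1_a2; rewrite /incomp b1_a2 andbF.
exists (level b); split; last by exists b1; rewrite ?inE ?Bb1 ?orbT ?levelB.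
move=> x; rewrite inE => /orP [/levelA|/levelB] ->; last by rewrite leqnn leqnSn.
by move: lvl_a1 lvl_a2; rewrite (levelA _ Aa1) (levelA _ Aa2) (levelB _ Bb1); lia.
Qed.

Lemma level_clone x y : clone lt x y -> level x = level y.
Proof. by case/andP => /eqP /(level_eq_Dn lt_order) ->. Qed.

Lemma part_letter_tangle X : is_tangle lt X -> exists l,
  [/\ part_letter lt X = Lt l, forall x, x \in X -> l <= level x <= l.+1
    & exists2 x, x \in X & level x = l].
Proof.
move=> tX; case: (tangle_levels tX) => l [X_lvl [x0 Xx0 lvl_x0]].
exists l; split => //; last by exists x0.
rewrite /part_letter tX -lvl_x0 (big_min_level lt_order Xx0) // => x /X_lvl.
by rewrite lvl_x0 => /andP [].
Qed.

Lemma part_letter_clone_set X : ~~ is_tangle lt X -> is_clone_set lt X -> exists2 x0,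
  x0 \in X & part_letter lt X = Lc (level x0) /\ forall x, x \in X -> level x = level x0.
Proof.
move=> ntX /existsP [x0 /andP [nt0 /eqP defX]].
have X_lvl x : x \in X -> level x = level x0.
  by rewrite defX inE => /andP [_ /level_clone ->].
have Xx0 : x0 \in X by rewrite defX inE nt0 /clone !eqxx.
exists x0 => //; split => //.
by rewrite /part_letter (negbTE ntX) (big_min_level lt_order Xx0) // => x /X_lvl ->.
Qed.

End ThreeOneFree.

(** * Commutation invariants of words *)

Notation letter_at w i := (nth (Lc 0) w i).

Lemma commute_lettersC a b : commute_letters a b = commute_letters b a.
Proof. by case: a b => i [] j /=; lia. Qed.

Lemma commute_letters_cc i : commute_letters (Lc i) (Lc i) = false.
Proof. by rewrite /=; lia. Qed.

Definition front_letters_ok (w : seq letter) : Prop :=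
  0 < size w /\ forall q, q < size w ->
    (forall p, p < q -> commute_letters (letter_at w p) (letter_at w q)) ->
    starts_c1_or_t12 [:: letter_at w q].

Definition cc_separated (w : seq letter) : Prop :=
  forall p q i, p < q < size w -> letter_at w p = Lc i -> letter_at w q = Lc i ->
    exists2 r, p < r < q & ~~ commute_letters (Lc i) (letter_at w r).

Definition swap_index (k i : nat) : nat :=
  if i == k then k.+1 else if i == k.+1 then k else i.

Lemma swap_indexK k : involutive (swap_index k).
Proof. by move=> i; rewrite /swap_index; repeat case: ifP; lia. Qed.

Lemma swap_index_lt k p q :
  p < q -> swap_index k p < swap_index k q \/ (p = k /\ q = k.+1).
Proof. by rewrite /swap_index; repeat case: ifP; lia. Qed.

Lemma swap_index_ltn k n i : k.+1 < n -> (swap_index k i < n) = (i < n).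
Proof. by rewrite /swap_index; repeat case: ifP; lia. Qed.

Lemma nth_cat_size_add (u s : seq letter) j : letter_at (u ++ s) (size u + j) = letter_at s j.
Proof. by rewrite nth_cat ltnNge leq_addr addKn. Qed.

Lemma nth_cat_size (u s : seq letter) : letter_at (u ++ s) (size u) = letter_at s 0.
Proof. by rewrite -(nth_cat_size_add u s 0) addn0. Qed.

Lemma nth_cat_sizeS (u s : seq letter) : letter_at (u ++ s) (size u).+1 = letter_at s 1.
Proof. by rewrite -(nth_cat_size_add u s 1) addn1. Qed.

Lemma nth_swap u a b v i :
  letter_at (u ++ b :: a :: v) i = letter_at (u ++ a :: b :: v) (swap_index (size u) i).
Proof.
case: (ltnP i (size u)) => [lt_iu|le_ui].
  by rewrite /swap_index !ifN ?nth_cat ?lt_iu //; lia.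
rewrite -(subnKC le_ui) /swap_index; case: (i - size u) => [|[|j]].
- by rewrite addn0 eqxx nth_cat_size nth_cat_sizeS.
- by rewrite addn1 gtn_eqF // eqxx nth_cat_size nth_cat_sizeS.
- by rewrite !ifN ?nth_cat_size_add //; lia.
Qed.

Lemma front_letters_ok_swap u a b v : commute_letters a b ->
  front_letters_ok (u ++ a :: b :: v) -> front_letters_ok (u ++ b :: a :: v).
Proof.
move=> ab [_ front]; split; first by rewrite size_cat /= addnS.
move=> q; rewrite size_cat /= => lt_q before_q; rewrite nth_swap; apply: front.
  by rewrite swap_index_ltn size_cat //=; lia.
move=> p /(swap_index_lt (size u)) [|[-> ->]]; last by rewrite nth_cat_size nth_cat_sizeS.
by rewrite swap_indexK => /before_q; rewrite !(nth_swap u a b v) swap_indexK.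
Qed.

Lemma cc_separated_swap u a b v : commute_letters a b ->
  cc_separated (u ++ a :: b :: v) -> cc_separated (u ++ b :: a :: v).
Proof.
move=> ab sep p q i /andP [lt_pq]; rewrite size_cat /= => lt_q; rewrite !(nth_swap u a b v) => pi qi.
have at_u : letter_at (u ++ a :: b :: v) (size u) = a by rewrite nth_cat_size.
have at_uS : letter_at (u ++ a :: b :: v) (size u).+1 = b by rewrite nth_cat_sizeS.
case: (swap_index_lt (size u) lt_pq) => [lt_pq'|[ep eq]]; last first.
  move: pi qi ab; rewrite ep eq /swap_index eqxx gtn_eqF // eqxx at_u at_uS => -> ->.
  by rewrite commute_letters_cc.
have lt_q' : swap_index (size u) q < size (u ++ a :: b :: v).
  by rewrite swap_index_ltn size_cat //=; lia.
case: (sep _ _ i (introT andP (conj lt_pq' lt_q')) pi qi) => r /andP [lt_pr lt_rq] nab.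
exists (swap_index (size u) r); last by rewrite nth_swap swap_indexK.
apply/andP; split.
- case: (swap_index_lt (size u) lt_pr) => [|[ep er]]; first by rewrite swap_indexK.
  by move: pi nab; rewrite ep er at_u at_uS => <-; rewrite ab.
- case: (swap_index_lt (size u) lt_rq) => [|[er eq]]; first by rewrite swap_indexK.
  by move: qi nab; rewrite er eq at_u at_uS => <-; rewrite commute_lettersC ab.
Qed.

Lemma swap_step_sym x y : swap_step x y -> swap_step y x.
Proof. by case=> u [v [a [b [ab [-> ->]]]]]; exists u, v, b, a; rewrite commute_lettersC. Qed.

Lemma swap_step_invariants x y : swap_step x y ->
  front_letters_ok x /\ cc_separated x -> front_letters_ok y /\ cc_separated y.
Proof.
case=> u [v [a [b [ab [-> ->]]]]] [front sep].
by split; [apply: front_letters_ok_swap | apply: cc_separated_swap].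
Qed.

Lemma word_equiv_invariants x y : word_equiv x y ->
  front_letters_ok x /\ cc_separated x <-> front_letters_ok y /\ cc_separated y.
Proof.
elim=> {x y} [x y xy|x|x y _ IH|x y z _ IH1 _ IH2]; try tauto.
by split; apply: swap_step_invariants; last apply: swap_step_sym.
Qed.

Lemma front_letters_ok_starts w : front_letters_ok w -> starts_c1_or_t12 w.
Proof. by case: w => [[]//|a w] [_ /(_ 0 isT)]; apply. Qed.

Lemma cc_separated_no_factor w : cc_separated w -> ~ has_factor_cici w.
Proof.
move=> sep [u [v [i defw]]].
have := sep (size u) (size u).+1 i; rewrite defw nth_cat_size nth_cat_sizeS size_cat /=.
by case=> //; [rewrite ltnSn; lia | move=> r; lia].
Qed.

Lemma word_equiv_move_front p u x v : all (commute_letters x) u ->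
  word_equiv (p ++ u ++ x :: v) (p ++ x :: u ++ v).
Proof.
elim: u p => [|y u IH] p /=; first by move=> _; apply: rst_refl.
case/andP => xy xu; have := IH (p ++ [:: y]) xu; rewrite -!catA /= => move_u.
apply: (rst_trans _ _ _ _ _ move_u); apply: rst_step.
by exists p, (u ++ v), y, x; rewrite commute_lettersC xy.
Qed.

Lemma front_letters_ok_of_starts w :
  (forall w', word_equiv w w' -> starts_c1_or_t12 w') -> front_letters_ok w.
Proof.
move=> starts; split; first by case: w starts => // /(_ [::] (rst_refl _ _ _)).
move=> q lt_q before_q.
have defw : w = take q w ++ letter_at w q :: drop q.+1 w.
  by rewrite -{1}(cat_take_drop q w) (drop_nth (Lc 0) lt_q).
have commute_q : all (commute_letters (letter_at w q)) (take q w).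
  apply/(all_nthP (Lc 0)) => p; rewrite size_take lt_q => lt_pq.
  by rewrite nth_take // commute_lettersC before_q.
have := word_equiv_move_front [::] (drop q.+1 w) commute_q; rewrite /= -defw => /starts.
by case: (letter_at w q) => [[|[|?]]|[|[|?]]].
Qed.

Lemma cc_separated_of_no_factor w :
  (forall w', word_equiv w w' -> ~ has_factor_cici w') -> cc_separated w.
Proof.
move=> no_cc p q i /andP [lt_pq lt_q] pi qi.
case: (boolP [exists r : 'I_(size w), (p < r < q) && ~~ commute_letters (Lc i) (letter_at w r)]).
  by case/existsP => r /andP [? ?]; exists r.
move=> /existsPn between; exfalso.
set m := take (q - p.+1) (drop p.+1 w).
have lt_p : p < size w by apply: ltn_trans lt_q.
have defw : w = take p w ++ Lc i :: m ++ Lc i :: drop q.+1 w.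
  rewrite -{1}(cat_take_drop p.+1 w) (take_nth (Lc 0) lt_p) -cats1 -catA pi /=.
  congr (_ ++ Lc i :: _); rewrite -{1}(cat_take_drop (q - p.+1) (drop p.+1 w)) drop_drop.
  by rewrite subnK // (drop_nth (Lc 0) lt_q) qi.
have commute_m : all (commute_letters (Lc i)) m.
  apply/(all_nthP (Lc 0)) => r; rewrite size_take size_drop => lt_r.
  have lt_rq : r < q - p.+1 by move: lt_r; case: ifP; lia.
  have lt_rw : p.+1 + r < size w by lia.
  rewrite nth_take // nth_drop; move: (between (Ordinal lt_rw)) => /=.
  by rewrite negb_and negbK => /orP [|//]; lia.
apply: (no_cc (take p w ++ Lc i :: Lc i :: m ++ drop q.+1 w)).
  have := word_equiv_move_front (take p w ++ [:: Lc i]) (drop q.+1 w) commute_m.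
  by rewrite -!catA /= -defw.
by exists (take p w), (m ++ drop q.+1 w), i.
Qed.

(** * The skeleton word of a (3+1)-free poset *)

Section Clones.
Variables (T : finType) (lt : rel T).

Lemma cloneP a b : reflect (Dn lt a = Dn lt b /\ Up lt a = Up lt b) (clone lt a b).
Proof. by apply: (iffP andP) => [[/eqP -> /eqP ->]|[-> ->]]. Qed.

Lemma clone_trans : transitive (clone lt).
Proof. by move=> b a c /cloneP [Da Ua] /cloneP [Db Ub]; apply/cloneP; rewrite Da Ua. Qed.

Lemma clone_sym : symmetric (clone lt).
Proof. by move=> a b; apply/cloneP/cloneP => -[Da Ua]; rewrite Da Ua. Qed.

Lemma clone_set_eq X u : is_clone_set lt X -> u \in X ->
  X = [set v | ~~ in_tangle lt v && clone lt u v].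
Proof.
case/existsP => x0 /andP [_ /eqP defX]; rewrite [in u \in X]defX inE => /andP [_ x0u].
rewrite defX; apply/setP => v; rewrite !inE; congr (_ && _); apply/idP/idP => [x0v|uv].
- by apply: clone_trans x0v; rewrite clone_sym.
- exact: clone_trans uv.
Qed.

Lemma clone_set_mem_clone X x z : is_clone_set lt X -> x \in X -> z \in X -> clone lt x z.
Proof. by move=> cX Xx; rewrite {1}(clone_set_eq cX Xx) inE => /andP []. Qed.

Lemma clone_sets_eq X Y x y : is_clone_set lt X -> is_clone_set lt Y -> x \in X -> y \in Y ->
  clone lt x y -> X = Y.
Proof.
move=> cX cY Xx Yy xy; rewrite (clone_set_eq cX Xx) (clone_set_eq cY Yy).
apply/setP => v; rewrite !inE; congr (_ && _); apply/idP/idP => [xv | yv].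
- by apply: clone_trans xv; rewrite clone_sym.
- exact: clone_trans yv.
Qed.

End Clones.

Section SkeletonWord.
Variables (T : finType) (lt : rel T).
Hypotheses (lt_order : strict_order lt) (lt_free : free31 lt).
Variable s : seq {set T}.
Hypothesis s_listing : compatible_listing lt s.

Local Notation level := (level lt).
Local Notation W := (map (part_letter lt) s).
Local Notation X_ j := (nth set0 s j).

Lemma is_part_nth r : r < size s -> is_part lt (X_ r).
Proof. by case: s_listing => _ listed _ lt_r; rewrite -listed mem_nth. Qed.

Lemma lt_parts i j a b : i < size s -> j < size s -> i != j -> a \in X_ i -> b \in X_ j ->
  lt a b = (level a + 2 <= level b) || ((level a + 1 == level b) && (i < j)).
Proof. by case: s_listing => _ _; apply. Qed.

Lemma exists_part_mem z : exists2 r, r < size s & z \in X_ r.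
Proof.
have [X partX Xz] : exists2 X, is_part lt X & z \in X.
  case: (boolP (in_tangle lt z)) => [/existsP [X /andP [tX Xz]]|ntz].
    by exists X; rewrite /is_part ?tX.
  exists [set y | ~~ in_tangle lt y && clone lt z y]; last by rewrite inE ntz; apply/cloneP.
  by apply/orP; right; apply/existsP; exists z; rewrite ntz eqxx.
case: s_listing => _ listed _; rewrite -listed in partX.
by exists (index X s); rewrite ?index_mem ?nth_index.
Qed.

Lemma nth_skeleton_word r : r < size s -> letter_at W r = part_letter lt (X_ r).
Proof. by move=> lt_r; rewrite (nth_map set0). Qed.

Lemma part_levels r : r < size s ->
  (exists l, letter_at W r = Lc l /\ forall y, y \in X_ r -> level y = l) \/
  (exists l, letter_at W r = Lt l /\ forall y, y \in X_ r -> l <= level y <= l.+1).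
Proof.
move=> lt_r; have := is_part_nth lt_r; rewrite nth_skeleton_word //.
case: (boolP (is_tangle lt (X_ r))) => [tX _ | ntX].
  by right; have [l [? ? _]] := part_letter_tangle lt_order lt_free tX; exists l.
rewrite /is_part (negbTE ntX) => cX.
by left; have [x0 _ [? ?]] := part_letter_clone_set lt_order ntX cX; exists (level x0).
Qed.

Lemma part_letter_Lc r i : r < size s -> letter_at W r = Lc i ->
  [/\ is_clone_set lt (X_ r), exists x, x \in X_ r & forall z, z \in X_ r -> level z = i].
Proof.
move=> lt_r; rewrite nth_skeleton_word // => Wr.
have ntX : ~~ is_tangle lt (X_ r) by move: Wr; rewrite /part_letter; case: is_tangle.
have cX : is_clone_set lt (X_ r) by move: (is_part_nth lt_r); rewrite /is_part (negbTE ntX).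
have [x0 Xx0 [Wr' lvl]] := part_letter_clone_set lt_order ntX cX.
by move: Wr; rewrite Wr' => -[<-]; split => //; exists x0.
Qed.

Lemma part_min r : r < size s -> exists2 a, a \in X_ r &
  (letter_at W r = Lc (level a) \/ letter_at W r = Lt (level a)) /\
  forall y, y \in X_ r -> level a <= level y.
Proof.
move=> lt_r; have := is_part_nth lt_r; rewrite nth_skeleton_word //.
case: (boolP (is_tangle lt (X_ r))) => [tX _ | ntX].
  have [l [Wr lvl [a Xa lvl_a]]] := part_letter_tangle lt_order lt_free tX.
  by exists a => //; rewrite Wr lvl_a; split => [|y /lvl /andP []]; [right|].
rewrite /is_part (negbTE ntX) => cX; have [a Xa [Wr lvl]] := part_letter_clone_set lt_order ntX cX.
by exists a => //; split => [|y /lvl ->]; [left|].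
Qed.

Lemma not_commute_part_letter r z a : r < size s -> z \in X_ r ->
  letter_index a = (level z).+1 \/ a = Lc (level z).-1 ->
  ~~ commute_letters a (letter_at W r).
Proof.
move=> lt_r Xz adj; case: (part_levels lt_r) => -[l [-> /(_ z Xz) lvl_z]];
  case: adj => [|->]; try case: a => j /=; lia.
Qed.

Lemma listing_front_letters_ok : 0 < #|T| -> front_letters_ok W.
Proof.
case/card_gt0P => x0 _; split.
  by have [r lt_r _] := exists_part_mem x0; rewrite size_map (leq_ltn_trans _ lt_r).
move=> q; rewrite size_map => lt_q before_q.
have [a Xa [Wq amin]] := part_min lt_q.
case: (leqP (level a) 1) => [lvl_a | /(exists_lt_level_pred lt_order) [b ba lvl_b]].
  by have := level_gt0 lt_order a; case: Wq => ->; case: (level a) lvl_a => [|[]].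
have [p lt_p Xb] := exists_part_mem b.
have ne_pq : p != q.
  by apply: contraTneq Xb => ->; apply/negP => /amin; rewrite lvl_b; have := level_lt lt_order ba; lia.
have lt_pq : p < q by move: ba; rewrite (lt_parts lt_p lt_q ne_pq Xb Xa); lia.
have adj : letter_index (letter_at W q) = (level b).+1.
  by have := level_lt lt_order ba; case: Wq => ->; rewrite /= lvl_b; lia.
by move: (not_commute_part_letter lt_p Xb (or_introl adj)); rewrite commute_lettersC before_q.
Qed.

(* Inside a clone set no two elements are comparable, so the listing formula
   also holds within a single clone set. *)
Lemma lt_parts_clone i j a b : i < size s -> j < size s ->
  (i = j -> is_clone_set lt (X_ i)) -> a \in X_ i -> b \in X_ j ->
  lt a b = (level a + 2 <= level b) || ((level a + 1 == level b) && (i < j)).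
Proof.
move=> lt_i lt_j cij Xa Xb; have [eq_ij | ne_ij] := eqVneq i j; last exact: lt_parts.
have ab : clone lt a b by apply: clone_set_mem_clone (cij eq_ij) Xa _; rewrite eq_ij.
have [eqD _] := cloneP _ _ _ ab; rewrite -(level_clone lt_order ab).
have := congr1 (fun S : {set T} => a \in S) eqD; rewrite !inE lt_irrefl // => <-.
lia.
Qed.

Lemma clone_across_gap p q i x y : p < q < size s ->
  letter_at W p = Lc i -> letter_at W q = Lc i -> x \in X_ p -> y \in X_ q ->
  (forall r z, p < r < q -> z \in X_ r -> (level z + 1 != i) && (level z != i + 1)) ->
  clone lt x y.
Proof.
move=> /andP [lt_pq lt_q] Wp Wq Xx Xy gap; have lt_p := ltn_trans lt_pq lt_q.
have [cp _ lvl_p] := part_letter_Lc lt_p Wp; have [cq _ lvl_q] := part_letter_Lc lt_q Wq.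
have arith r lz : (r = p \/ r = q -> lz = i) ->
    (p < r < q -> (lz + 1 != i) && (lz != i + 1)) ->
    ((lz + 2 <= i) || ((lz + 1 == i) && (r < p))) = ((lz + 2 <= i) || ((lz + 1 == i) && (r < q))) /\
    ((i + 2 <= lz) || ((i + 1 == lz) && (p < r))) = ((i + 2 <= lz) || ((i + 1 == lz) && (q < r))).
  by clear -lt_pq; lia.
suff [eqD eqU] : (forall z, lt z x = lt z y) /\ (forall z, lt x z = lt y z).
  by apply/cloneP; split; apply/setP => z; rewrite !inE.
have cl_p r : r = p -> is_clone_set lt (X_ r) by move->.
have cl_q r : r = q -> is_clone_set lt (X_ r) by move->.
have lvl_pq r z : z \in X_ r -> r = p \/ r = q -> level z = i.
  by move=> Xz [] er; [apply: lvl_p | apply: lvl_q]; rewrite -er.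
split=> z; have [r lt_r Xz] := exists_part_mem z.
all: have [arith_D arith_U] := arith r (level z) (lvl_pq r z Xz) (fun h => gap r z h Xz).
- rewrite (lt_parts_clone lt_r lt_p (cl_p r) Xz Xx) (lt_parts_clone lt_r lt_q (cl_q r) Xz Xy).
  by rewrite (lvl_p x Xx) (lvl_q y Xy).
- rewrite (lt_parts_clone lt_p lt_r (fun=> cp) Xx Xz) (lt_parts_clone lt_q lt_r (fun=> cq) Xy Xz).
  by rewrite (lvl_p x Xx) (lvl_q y Xy).
Qed.

Lemma listing_cc_separated : cc_separated W.
Proof.
move=> p q i; rewrite size_map => /andP [lt_pq lt_q] Wp Wq; have lt_p := ltn_trans lt_pq lt_q.
case: (boolP [exists r : 'I_(size s), (p < r < q) && ~~ commute_letters (Lc i) (letter_at W r)]).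
  by case/existsP => r /andP [? ?]; exists r.
move=> /existsPn commute_between; exfalso.
have gap r z : p < r < q -> z \in X_ r -> (level z + 1 != i) && (level z != i + 1).
  move=> /andP [lt_pr lt_rq] Xz; have lt_r := ltn_trans lt_rq lt_q.
  have /nandP [/negP [] | /negPn commute_r] := commute_between (Ordinal lt_r).
    exact/andP.
  by apply/andP; split; apply: contraL commute_r => /eqP lvl;
    apply: (not_commute_part_letter lt_r Xz); [left; rewrite -lvl addn1 | right; rewrite lvl addn1].
have [cp [x Xx _]] := part_letter_Lc lt_p Wp; have [cq [y Xy _]] := part_letter_Lc lt_q Wq.
have xy := clone_across_gap (introT andP (conj lt_pq lt_q)) Wp Wq Xx Xy gap.
case: s_listing => s_uniq _ _; move: (clone_sets_eq cp cq Xx Xy xy).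
by move/eqP; rewrite nth_uniq // (ltn_eqF lt_pq).
Qed.

End SkeletonWord.

(** * A poset realizing a word *)

Lemma top_relC (T : finType) (lt : rel T) : symmetric (top_rel lt).
Proof. by move=> a b; rewrite /top_rel andbC. Qed.

Lemma bot_relC (T : finType) (lt : rel T) : symmetric (bot_rel lt).
Proof. by move=> a b; rewrite /bot_rel andbC. Qed.

Definition is_tangle_letter (a : letter) : bool := if a is Lt _ then true else false.

Definition letter_has_level (a : letter) (m : nat) : bool :=
  match a with Lc i => i == m | Lt i => (i == m) || (i.+1 == m) end.

(* Position k of w gives the four vertices (k, 0..3).  For c_i they are clones
   at level i; for t_{i,i+1}, (k,0), (k,1) form the top at level i+1 and
   (k,2), (k,3) the bottom at level i, with (k,2) < (k,0) and (k,3) < (k,1).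
   Vertices at different positions are ordered as in a compatible listing. *)
Section Construction.
Variable w : seq letter.
Hypothesis w_valid : all valid_letter w.

Local Notation vertex := ('I_(size w) * 'I_4)%type.
Local Notation letter_of x := (letter_at w x.1).

Definition vtop (x : vertex) : bool := is_tangle_letter (letter_of x) && (x.2 < 2).
Definition vbot (x : vertex) : bool := is_tangle_letter (letter_of x) && (1 < x.2).
Definition vlevel (x : vertex) : nat := letter_index (letter_of x) + vtop x.

Definition tangle_lt (x y : vertex) : bool := is_tangle_letter (letter_of x) &&
  (((x.2 == 2 :> nat) && (y.2 == 0 :> nat)) || ((x.2 == 3 :> nat) && (y.2 == 1 :> nat))).

Definition word_lt (x y : vertex) : bool :=
  if x.1 == y.1 then tangle_lt x y
  else (vlevel x + 2 <= vlevel y) || ((vlevel x + 1 == vlevel y) && (x.1 < y.1)).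

Lemma letter_index_gt0 (x : vertex) : 0 < letter_index (letter_of x).
Proof. exact: (all_nthP (Lc 0) w_valid) x.1 (ltn_ord _). Qed.

Lemma vlevel_same_pos (x y : vertex) : (x.1 : nat) = y.1 -> vlevel y <= vlevel x + 1.
Proof. by move=> /val_inj eq_xy; rewrite /vlevel /vtop eq_xy; case: is_tangle_letter => /=; lia. Qed.

Lemma word_ltE (x y : vertex) : word_lt x y ->
  ((x.1 : nat) = y.1 /\ vlevel y = vlevel x + 1) \/
  ((x.1 : nat) <> y.1 /\ (vlevel x + 2 <= vlevel y \/ (vlevel x + 1 = vlevel y /\ x.1 < y.1))).
Proof.
rewrite /word_lt; case: (x.1 =P y.1) => [eq_xy xy | ne_xy xy]; last first.
  by right; split; [move=> /val_inj | lia].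
left; split; first by rewrite eq_xy.
move: (ltn_ord x.2) (ltn_ord y.2) xy; rewrite /tangle_lt /vlevel /vtop eq_xy.
by case: is_tangle_letter => //=; lia.
Qed.

Lemma not_word_ltE (x y : vertex) : ~~ word_lt x y ->
  (x.1 : nat) = y.1 \/ (vlevel y < vlevel x + 2 /\ (vlevel x + 1 = vlevel y -> y.1 <= x.1)).
Proof. by rewrite /word_lt; case: (x.1 =P y.1) => [-> | _]; [left | right; lia]. Qed.

Lemma vlevel_lt (x y : vertex) : word_lt x y -> vlevel x < vlevel y.
Proof. by move/word_ltE; lia. Qed.

Lemma word_lt_order : strict_order word_lt.
Proof.
split=> [x | x y z xy yz].
  by rewrite /word_lt eqxx /tangle_lt; apply/negP => /andP [_]; lia.
have := vlevel_lt xy; have := vlevel_lt yz; rewrite /word_lt; case: eqP => [/(congr1 (@nat_of_ord _))|_].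
  by move/vlevel_same_pos; lia.
by move=> *; apply/orP; left; lia.
Qed.

Lemma word_lt_free : free31 word_lt.
Proof.
case=> a [b [c [d [ab bc]]]]; rewrite /incomp => /and3P [_ _ nda] /and3P _ /and3P [_ ndc _].
have := word_ltE ab; have := word_ltE bc; have := not_word_ltE nda; have := not_word_ltE ndc.
have := @vlevel_same_pos a d; have := @vlevel_same_pos d c; have := @vlevel_same_pos a c.
lia.
Qed.

Hypotheses (w_front : front_letters_ok w) (w_separated : cc_separated w).

Local Notation o0 := (@Ordinal 4 0 isT).
Local Notation o1 := (@Ordinal 4 1 isT).
Local Notation o2 := (@Ordinal 4 2 isT).
Local Notation o3 := (@Ordinal 4 3 isT).

Lemma vertex_at_level r m : r < size w -> letter_has_level (letter_at w r) m ->
  exists z : vertex, (z.1 : nat) = r /\ vlevel z = m.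
Proof.
move=> lt_r; case E: (letter_at w r) => [i|i] /=.
- by move=> /eqP <-; exists (Ordinal lt_r, o0); rewrite /vlevel /vtop /= E /= addn0.
- case/orP => /eqP <-.
  + by exists (Ordinal lt_r, o2); rewrite /vlevel /vtop /= E /= addn0.
  + by exists (Ordinal lt_r, o0); rewrite /vlevel /vtop /= E /= addn1.
Qed.

(* Some earlier letter fails to commute with the one at k, since otherwise it
   would be c_1 or t_12; and the levels occupied before k are closed downwards. *)
Lemma exists_letter_below k : k < size w -> 1 < letter_index (letter_at w k) ->
  exists2 p, p < k & letter_has_level (letter_at w p) (letter_index (letter_at w k)).-1.
Proof.
elim/ltn_ind: k => k IH lt_k idx_k.
have down m : 0 < m -> forall M, m <= M ->
    (exists2 p, p < k & letter_has_level (letter_at w p) M) ->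
    exists2 p, p < k & letter_has_level (letter_at w p) m.
  move=> m_gt0; elim=> [|M IHM] le_mM [p lt_pk has_M]; first lia.
  have [-> | ne_mM] := eqVneq m M.+1; first by exists p.
  apply: IHM; first lia.
  have lt_p : p < size w by apply: ltn_trans lt_k.
  have below_p : 1 < letter_index (letter_at w p) ->
      exists2 p', p' < k & letter_has_level (letter_at w p') (letter_index (letter_at w p)).-1.
    by move=> idx_p; have [p' lt_pp' ?] := IH p lt_pk lt_p idx_p; exists p' => //; apply: ltn_trans lt_pk.
  case E: (letter_at w p) has_M below_p => [i|i] /=; last case/orP.
  - by move=> /eqP -> /(_ ltac:(lia)).
  - by move=> /eqP -> /(_ ltac:(lia)).
  - by move=> /eqP [idx_p] _; exists p; rewrite // E /= idx_p eqxx.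
case: (boolP [exists p : 'I_k, ~~ commute_letters (letter_at w p) (letter_at w k)]).
  case/existsP=> p; case E: (letter_at w p) => [j|j] np;
    [apply: (down _ _ j) | apply: (down _ _ j.+1)]; try (by exists p; rewrite // E /= eqxx ?orbT);
    by move: np; case: (letter_at w k) idx_k => i /=; lia.
move=> /existsPn commute_all; case: w_front => _ /(_ k lt_k).
have before_k p : p < k -> commute_letters (letter_at w p) (letter_at w k).
  by move=> lt_pk; have := commute_all (Ordinal lt_pk); rewrite negbK.
by move/(_ before_k); move: idx_k; case: (letter_at w k) => [[|[|i]]|[|[|i]]].
Qed.

Lemma exists_word_lt_pred (x : vertex) :
  1 < vlevel x -> exists2 y, word_lt y x & vlevel y = (vlevel x).-1.
Proof.
case tx: (vtop x) => lvl_x.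
  have /andP [tl lt_x2] := tx.
  have x2K : (inord (x.2 + 2) : 'I_4) = x.2 + 2 :> nat by rewrite inordK; lia.
  exists (x.1, inord (x.2 + 2)).
  - by rewrite /word_lt eqxx /tangle_lt /= tl x2K; lia.
  - by rewrite /vlevel /vtop /= tl x2K lt_x2; lia.
have vlevel_x : vlevel x = letter_index (letter_of x) by rewrite /vlevel tx addn0.
rewrite vlevel_x in lvl_x *.
have [p lt_px has_p] := exists_letter_below (ltn_ord x.1) lvl_x.
have [z [zp lvl_z]] := vertex_at_level (ltn_trans lt_px (ltn_ord _)) has_p.
exists z => //; rewrite /word_lt ifN; last by apply: contraTneq lt_px => <-; rewrite -zp ltnn.
by rewrite lvl_z vlevel_x zp lt_px; lia.
Qed.

Lemma used_word_lt k : used word_lt k = [set x | vlevel x <= k].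
Proof.
elim: k => [|k IH]; first by apply/setP => x; rewrite !inE /vlevel; have := letter_index_gt0 x; lia.
apply/setP => x; rewrite mem_usedS IH !inE.
case: (leqP (vlevel x) k) => [le_xk | lt_kx] /=; first by rewrite ltnW.
apply/forallP/idP => [below | le_xk y].
- case: (leqP (vlevel x) k.+1) => // lt_x; have [y yx lvl_y] := @exists_word_lt_pred x ltac:(lia).
  by move: (below y); rewrite yx inE /=; lia.
- by apply/implyP => /vlevel_lt; rewrite inE; lia.
Qed.

Lemma level_word_lt x : level word_lt x = vlevel x.
Proof.
apply/eqP; rewrite eqn_leq -(mem_used word_lt_order) used_word_lt inE leqnn /=.
by have := mem_used word_lt_order x (level word_lt x); rewrite used_word_lt inE leqnn.
Qed.

Lemma vtop_same_pos (x y : vertex) : x.1 = y.1 -> vlevel x = vlevel y -> vtop x = vtop y.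
Proof. by move=> eq_xy; rewrite /vlevel eq_xy; case: (vtop x); case: (vtop y) => //=; lia. Qed.

Lemma vbot_same_pos (x y : vertex) : x.1 = y.1 -> vlevel x = vlevel y -> vbot x = vbot y.
Proof.
move=> eq_xy /(vtop_same_pos eq_xy); move: (ltn_ord x.2) (ltn_ord y.2).
by rewrite /vbot /vtop eq_xy; case: is_tangle_letter => //=; lia.
Qed.

(* Below a vertex outside the top of a tangle there is nothing at its own position. *)
Lemma Dn_same_pos (x y : vertex) :
  x.1 = y.1 -> vlevel x = vlevel y -> ~~ vtop x -> Dn word_lt x = Dn word_lt y.
Proof.
move=> eq_xy lvl_xy ntx; have nty : ~~ vtop y by rewrite -(vtop_same_pos eq_xy lvl_xy).
apply/setP => z; rewrite !inE /word_lt -eq_xy lvl_xy; case: eqP => // ezx.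
move: ntx nty; rewrite /tangle_lt /vtop -eq_xy ezx.
by case: is_tangle_letter => //=; lia.
Qed.

Lemma Up_same_pos (x y : vertex) :
  x.1 = y.1 -> vlevel x = vlevel y -> ~~ vbot x -> Up word_lt x = Up word_lt y.
Proof.
move=> eq_xy lvl_xy nbx; have nby : ~~ vbot y by rewrite -(vbot_same_pos eq_xy lvl_xy).
apply/setP => z; rewrite !inE /word_lt -eq_xy lvl_xy; case: eqP => // exz.
move: nbx nby; rewrite /tangle_lt /vbot -eq_xy.
by case: is_tangle_letter => //=; lia.
Qed.

Lemma Dn_subset_pos (x y : vertex) :
  vlevel x = vlevel y -> x.1 < y.1 -> Dn word_lt x \subset Dn word_lt y.
Proof.
move=> lvl_xy lt_xy; apply/subsetP => z; rewrite !inE => zx.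
have := word_ltE zx; have := @vlevel_same_pos z y; have := @vlevel_same_pos y z.
rewrite /word_lt; case: eqP => [/(congr1 (@nat_of_ord _)) ezy | _]; lia.
Qed.

Lemma Up_subset_pos (x y : vertex) :
  vlevel x = vlevel y -> x.1 < y.1 -> Up word_lt y \subset Up word_lt x.
Proof.
move=> lvl_xy lt_xy; apply/subsetP => z; rewrite !inE => yz.
have := word_ltE yz; have := @vlevel_same_pos z x; have := @vlevel_same_pos x z.
rewrite /word_lt; case: eqP => [/(congr1 (@nat_of_ord _)) exz | _]; lia.
Qed.

Lemma word_lt_same_pos (a b : vertex) : a.1 = b.1 -> word_lt a b = tangle_lt a b.
Proof. by rewrite /word_lt => ->; rewrite eqxx. Qed.

Lemma top_rel_word_lt (x y : vertex) : top_rel word_lt x y -> x.1 = y.1 /\ vtop x /\ vtop y.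
Proof.
move=> xy; have lvl_xy : vlevel x = vlevel y.
  by rewrite -!level_word_lt (level_top_rel word_lt_order word_lt_free xy).
case/andP: xy => nDxy nDyx.
have eq_xy : x.1 = y.1.
  apply: ord_inj; case: (ltngtP x.1 y.1) => // lt_xy; first by move: nDxy; rewrite (Dn_subset_pos lvl_xy lt_xy).
  by move: nDyx; rewrite (Dn_subset_pos (esym lvl_xy) lt_xy).
split=> //; split; apply/negPn/negP => nt.
- by move: nDxy; rewrite (Dn_same_pos eq_xy lvl_xy nt) subxx.
- by move: nDyx; rewrite (Dn_same_pos (esym eq_xy) (esym lvl_xy) nt) subxx.
Qed.

Lemma bot_rel_word_lt (x y : vertex) : bot_rel word_lt x y -> x.1 = y.1 /\ vbot x /\ vbot y.
Proof.
move=> xy; have lvl_xy : vlevel x = vlevel y.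
  by rewrite -!level_word_lt (level_bot_rel word_lt_order word_lt_free xy).
case/andP: xy => nUxy nUyx.
have eq_xy : x.1 = y.1.
  apply: ord_inj; case: (ltngtP x.1 y.1) => // lt_xy; first by move: nUyx; rewrite (Up_subset_pos lvl_xy lt_xy).
  by move: nUxy; rewrite (Up_subset_pos (esym lvl_xy) lt_xy).
split=> //; split; apply/negPn/negP => nb.
- by move: nUxy; rewrite (Up_same_pos eq_xy lvl_xy nb) subxx.
- by move: nUyx; rewrite (Up_same_pos (esym eq_xy) (esym lvl_xy) nb) subxx.
Qed.

Lemma vertex_neq_same_pos (x y : vertex) : x.1 = y.1 -> x != y -> (x.2 : nat) != y.2.
Proof. by case: x y => [a b] [c d] /= ->; apply: contra => /eqP /val_inj ->. Qed.

Lemma top_rel_of_vtop (x y : vertex) :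
  x.1 = y.1 -> vtop x -> vtop y -> x != y -> top_rel word_lt x y.
Proof.
move=> eq_xy tx ty /(vertex_neq_same_pos eq_xy) ne_xy.
move: tx ty; rewrite /vtop -eq_xy => /andP [tl lt_x] /andP [_ lt_y].
have below (j : nat) (u : vertex) : j < 2 -> u.1 = x.1 ->
    word_lt (x.1, inord (j + 2)) u = (u.2 == j :> nat).
  move=> lt_j eq_u; rewrite word_lt_same_pos // /tangle_lt /= tl inordK; last by lia.
  by have := ltn_ord u.2; lia.
apply/andP; split; apply/subsetPn;
  [exists (x.1, inord (x.2 + 2)) | exists (x.1, inord (y.2 + 2))];
  by rewrite !inE ?below // eq_sym.
Qed.

Lemma bot_rel_of_vbot (x y : vertex) :
  x.1 = y.1 -> vbot x -> vbot y -> x != y -> bot_rel word_lt x y.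
Proof.
move=> eq_xy bx byy /(vertex_neq_same_pos eq_xy) ne_xy.
move: bx byy; rewrite /vbot -eq_xy => /andP [tl lt_x] /andP [_ lt_y].
have above (j : nat) (u : vertex) : 1 < j < 4 -> u.1 = x.1 ->
    word_lt u (x.1, inord (j - 2)) = (u.2 == j :> nat).
  move=> lt_j eq_u; rewrite word_lt_same_pos // /tangle_lt /= eq_u tl inordK; last by lia.
  by have := ltn_ord u.2; lia.
apply/andP; split; apply/subsetPn;
  [exists (x.1, inord (x.2 - 2)) | exists (x.1, inord (y.2 - 2))];
  by rewrite !inE ?above ?lt_x ?lt_y ?ltn_ord // eq_sym.
Qed.

Lemma top_component v : vtop v ->
  [set x | connect (top_rel word_lt) v x] = [set x | (x.1 == v.1) && vtop x].
Proof.
move=> tv; apply/setP => x; rewrite !inE; apply/idP/idP.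
- have sym := sym_connect_sym (@top_relC _ word_lt).
  have cl : closed (top_rel word_lt) [pred u | (u.1 == v.1) && vtop u].
    by apply: (intro_closed sym) => a b /top_rel_word_lt [eab [_ tb]]; rewrite !inE /= -eab tb andbT => /andP [].
  by move/(closed_connect cl); rewrite !inE /= eqxx ?tv ?bv => <-.
- case/andP => /eqP exv tx; have [-> | ne_vx] := eqVneq v x; first exact: connect0.
  by apply: connect1; apply: top_rel_of_vtop.
Qed.

Lemma top_component_single v : ~~ vtop v -> [set x | connect (top_rel word_lt) v x] = [set v].
Proof.
move=> ntv; apply/setP => x; rewrite !inE; apply/idP/idP => [|/eqP <-]; last exact: connect0.
have sym := sym_connect_sym (@top_relC _ word_lt).
have cl : closed (top_rel word_lt) (pred1 v).
  by apply: (intro_closed sym) => a b /top_rel_word_lt [_ [ta _]] /eqP eav; move: ntv; rewrite -eav ta.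
by move/(closed_connect cl); rewrite !inE /= eqxx ?tv ?bv => <-.
Qed.

Lemma bot_component v : vbot v ->
  [set x | connect (bot_rel word_lt) v x] = [set x | (x.1 == v.1) && vbot x].
Proof.
move=> bv; apply/setP => x; rewrite !inE; apply/idP/idP.
- have sym := sym_connect_sym (@bot_relC _ word_lt).
  have cl : closed (bot_rel word_lt) [pred u | (u.1 == v.1) && vbot u].
    by apply: (intro_closed sym) => a b /bot_rel_word_lt [eab [_ bb]]; rewrite !inE /= -eab bb andbT => /andP [].
  by move/(closed_connect cl); rewrite !inE /= eqxx ?tv ?bv => <-.
- case/andP => /eqP exv bx; have [-> | ne_vx] := eqVneq v x; first exact: connect0.
  by apply: connect1; apply: bot_rel_of_vbot.
Qed.

Lemma bot_component_single v : ~~ vbot v -> [set x | connect (bot_rel word_lt) v x] = [set v].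
Proof.
move=> nbv; apply/setP => x; rewrite !inE; apply/idP/idP => [|/eqP <-]; last exact: connect0.
have sym := sym_connect_sym (@bot_relC _ word_lt).
have cl : closed (bot_rel word_lt) (pred1 v).
  by apply: (intro_closed sym) => a b /bot_rel_word_lt [_ [ba _]] /eqP eav; move: nbv; rewrite -eav ba.
by move/(closed_connect cl); rewrite !inE /= eqxx ?tv ?bv => <-.
Qed.

Lemma is_top_word_lt (A : {set vertex}) :
  is_top word_lt A -> exists2 a, vtop a & A = [set x | (x.1 == a.1) && vtop x].
Proof.
case/andP => cardA /existsP [a /eqP defA]; case ta: (vtop a); first by exists a; rewrite // defA top_component.
by move: cardA; rewrite defA top_component_single ?ta // cards1.
Qed.

Lemma is_bot_word_lt (B : {set vertex}) :
  is_bot word_lt B -> exists2 b, vbot b & B = [set x | (x.1 == b.1) && vbot x].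
Proof.
case/andP => cardB /existsP [b /eqP defB]; case bb: (vbot b); first by exists b; rewrite // defB bot_component.
by move: cardB; rewrite defB bot_component_single ?bb // cards1.
Qed.

Definition position (k : 'I_(size w)) : {set vertex} := [set x | x.1 == k].

Lemma position_tangle (k : 'I_(size w)) : is_tangle_letter (letter_at w k) -> is_tangle word_lt (position k).
Proof.
move=> tl; pose A := [set x : vertex | (x.1 == k) && vtop x].
pose B := [set x : vertex | (x.1 == k) && vbot x].
have two (S : {set vertex}) (i j : 'I_4) : (k, i) \in S -> (k, j) \in S -> i != j -> 1 < #|S|.
  move=> Si Sj ne_ij; apply: leq_trans (subset_leq_card (_ : [set (k, i); (k, j)] \subset S)).
    by rewrite cards2 xpair_eqE eqxx ne_ij.
  by apply/subsetP => x; rewrite !inE => /orP [] /eqP ->.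
apply/existsP; exists A; apply/existsP; exists B; apply/and4P; split.
- apply/andP; split; first by apply: (two _ o0 o1); rewrite ?inE /vtop /= ?tl ?eqxx.
  by apply/existsP; exists (k, o0); rewrite top_component // /vtop /= tl.
- apply/andP; split; first by apply: (two _ o2 o3); rewrite ?inE /vbot /= ?tl ?eqxx.
  by apply/existsP; exists (k, o2); rewrite bot_component // /vbot /= tl.
- apply/existsP; exists (k, o0); apply/existsP; exists (k, o1).
  apply/existsP; exists (k, o2); apply/existsP; exists (k, o3).
  by rewrite !inE /vtop /vbot /incomp !word_lt_same_pos //= /tangle_lt /= tl !xpair_eqE eqxx.
- apply/eqP/setP => x; rewrite !inE /vtop /vbot; case: eqP => //= ->; rewrite tl /=; lia.
Qed.

Lemma tangle_position X : is_tangle word_lt X ->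
  exists2 k : 'I_(size w), is_tangle_letter (letter_at w k) & X = position k.
Proof.
case/existsP => A /existsP [B /and4P [/is_top_word_lt [a ta defA] /is_bot_word_lt [b bb defB]]].
case/existsP => a1 /existsP [a2 /existsP [b1 /existsP [b2]]].
case/and4P => Aa1 Aa2 Bb1 /and4P [_ _ _ /and4P [b1a1 _ _ /and3P [_ b1a2 _]]] /eqP ->.
move: Aa1 Aa2 Bb1; rewrite defA defB !inE => /andP [/eqP a1a ta1] /andP [/eqP a2a ta2] /andP [/eqP b1b bb1].
(* At another position, b1 would compare with a2 exactly as it does with a1. *)
have eq_ba : b.1 = a.1.
  apply/eqP; apply: contraTT b1a2 => ne_ba.
  have lvl_a12 : vlevel a1 = vlevel a2 by rewrite /vlevel ta1 ta2 a1a a2a.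
  by move: b1a1; rewrite /incomp /word_lt b1b a1a a2a (negbTE ne_ba) -a1a -lvl_a12 => ->; rewrite andbF.
exists a.1; first by case/andP: ta.
apply/setP => x; rewrite !inE eq_ba /vtop /vbot; case: eqP => //= ->.
by case/andP: ta => -> _ /=; lia.
Qed.

Lemma in_tangle_word_lt v : in_tangle word_lt v = is_tangle_letter (letter_of v).
Proof.
apply/idP/idP => [/existsP [X /andP [/tangle_position [k tk ->]]]|tv]; first by rewrite inE => /eqP ->.
by apply/existsP; exists (position v.1); rewrite position_tangle //= inE.
Qed.

Lemma exists_adjacent_between q : forall p i, p < q < size w ->
  letter_at w p = Lc i -> letter_at w q = Lc i ->
  exists2 r, p < r < q & letter_has_level (letter_at w r) i.-1 || letter_has_level (letter_at w r) i.+1.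
Proof.
elim/ltn_ind: q => q IH p i /andP [lt_pq lt_q] pi qi.
have [r /andP [lt_pr lt_rq]] := w_separated (introT andP (conj lt_pq lt_q)) pi qi.
case E: (letter_at w r) => [j|j] /= nc; last by exists r; rewrite ?lt_pr // E /=; lia.
have [eq_ji | ne_ji] := eqVneq j i; last by exists r; rewrite ?lt_pr // E /=; lia.
rewrite eq_ji in E.
have [r' /andP [lt_pr' lt_r'r] adj] := IH r lt_rq p i (introT andP (conj lt_pr (ltn_trans lt_rq lt_q))) pi E.
by exists r' => //; rewrite lt_pr' (ltn_trans lt_r'r).
Qed.

Lemma word_lt_diff_pos (x y : vertex) : (x.1 : nat) != y.1 ->
  word_lt x y = (vlevel x + 2 <= vlevel y) || ((vlevel x + 1 == vlevel y) && (x.1 < y.1)).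
Proof. by move=> ne_xy; rewrite /word_lt ifN //; apply: contra ne_xy => /eqP ->. Qed.

Lemma vlevel_gt0 (x : vertex) : 0 < vlevel x.
Proof. exact: leq_trans (letter_index_gt0 x) (leq_addr _ _). Qed.

Lemma not_clone_diff_pos (x y : vertex) : x.1 < y.1 ->
  ~~ is_tangle_letter (letter_of x) -> ~~ is_tangle_letter (letter_of y) ->
  vlevel x = vlevel y -> ~~ clone word_lt x y.
Proof.
move=> lt_xy ntx nty lvl_xy.
have letter_Lc (u : vertex) : ~~ is_tangle_letter (letter_of u) -> letter_of u = Lc (vlevel u).
  by rewrite /vlevel /vtop; case: (letter_of u) => //= i _; rewrite addn0.
have := letter_Lc _ ntx; have := letter_Lc _ nty; rewrite -lvl_xy => Ey Ex.
have [r /andP [lt_xr lt_ry] adj] :=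
  exists_adjacent_between (introT andP (conj lt_xy (ltn_ord y.1))) Ex Ey.
have lt_r : r < size w := ltn_trans lt_ry (ltn_ord _).
apply/negP => /cloneP [eqD eqU].
have z_in (S T : {set vertex}) z : S = T -> (z \in S) = (z \in T) by move->.
case/orP: adj => /(vertex_at_level lt_r) [z [zr lvl_z]]; have := vlevel_gt0 z.
- by move: (z_in _ _ z eqD); rewrite !inE !word_lt_diff_pos ?zr; lia.
- by move: (z_in _ _ z eqU); rewrite !inE !word_lt_diff_pos ?zr; lia.
Qed.

Lemma clone_class_word_lt (v y : vertex) : ~~ is_tangle_letter (letter_of v) ->
  (~~ in_tangle word_lt y && clone word_lt v y) = (y.1 == v.1).
Proof.
move=> ntv; rewrite in_tangle_word_lt; apply/idP/idP => [/andP [nty vy] | /eqP eyv].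
  have lvl_vy : vlevel v = vlevel y by rewrite -!level_word_lt (level_clone word_lt_order vy).
  case: (ltngtP v.1 y.1) => [lt_vy | lt_yv | /ord_inj ->]; last by rewrite eqxx.
  - by rewrite (negbTE (not_clone_diff_pos lt_vy ntv nty lvl_vy)) in vy.
  - by rewrite clone_sym (negbTE (not_clone_diff_pos lt_yv nty ntv (esym lvl_vy))) in vy.
have lvl_vy : vlevel v = vlevel y by rewrite /vlevel /vtop eyv (negbTE ntv).
rewrite eyv ntv; apply/cloneP; split.
- by apply: Dn_same_pos => //; rewrite /vtop (negbTE ntv).
- by apply: Up_same_pos => //; rewrite /vbot (negbTE ntv).
Qed.

Lemma position_inj : injective position.
Proof. move=> k1 k2 eq_k; have : (k1, o0) \in position k1 by rewrite inE.
by rewrite eq_k inE => /eqP. Qed.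

Lemma is_part_position k : is_part word_lt (position k).
Proof.
rewrite /is_part; case tk: (is_tangle_letter (letter_at w k)); first by rewrite position_tangle.
apply/orP; right; apply/existsP; exists (k, o0).
by rewrite in_tangle_word_lt tk; apply/eqP/setP => y; rewrite !inE clone_class_word_lt ?tk.
Qed.

Lemma is_part_word_lt X : is_part word_lt X -> exists k, X = position k.
Proof.
case/orP => [/tangle_position [k _ ->] | /existsP [x /andP [ntx /eqP ->]]]; first by exists k.
by exists x.1; apply/setP => y; rewrite !inE clone_class_word_lt // -in_tangle_word_lt.
Qed.

Lemma part_letter_position k : part_letter word_lt (position k) = letter_at w k.
Proof.
have tangle_k : is_tangle word_lt (position k) = is_tangle_letter (letter_at w k).
  apply/idP/idP; last exact: position_tangle.
  by case/tangle_position => k' tk' /position_inj ->.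
rewrite /part_letter tangle_k (big_min_level word_lt_order (x0 := (k, o2))) ?inE //.
  by rewrite level_word_lt /vlevel /vtop /= andbF addn0; case: (letter_at w k).
by move=> x; rewrite inE !level_word_lt /vlevel /vtop /= andbF addn0 => /eqP ->; apply: leq_addr.
Qed.

Definition position_listing : seq {set vertex} := [seq position k | k <- enum 'I_(size w)].

Lemma nth_position_listing i : i < size w ->
  exists k : 'I_(size w), (k : nat) = i /\ nth set0 position_listing i = position k.
Proof.
move=> lt_i; exists (nth (Ordinal lt_i) (enum 'I_(size w)) i); split; first by rewrite nth_enum_ord.
by rewrite (nth_map (Ordinal lt_i)) // size_enum_ord.
Qed.

Lemma position_listing_compatible : compatible_listing word_lt position_listing.
Proof.
split.
- by rewrite map_inj_uniq ?enum_uniq //; apply: position_inj.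
- move=> X; apply/idP/idP => [/mapP [k _ ->] | /is_part_word_lt [k ->]].
    exact: is_part_position.
  by apply: map_f; rewrite mem_enum.
- move=> i j a b; rewrite size_map size_enum_ord => lt_i lt_j ne_ij.
  have [ki [eki ->]] := nth_position_listing lt_i; have [kj [ekj ->]] := nth_position_listing lt_j.
  rewrite !inE !level_word_lt => /eqP ai /eqP bj.
  by rewrite word_lt_diff_pos ai bj eki ekj.
Qed.

Lemma position_listing_word : map (part_letter word_lt) position_listing = w.
Proof.
apply: (@eq_from_nth _ (Lc 0)); first by rewrite !size_map -enumT size_enum_ord.
move=> i; rewrite !size_map -enumT size_enum_ord => lt_i.
rewrite (nth_map set0) ?size_map -?enumT ?size_enum_ord //.
by have [k [<- ->]] := nth_position_listing lt_i; rewrite part_letter_position.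
Qed.

End Construction.

Unset Implicit Arguments.

Theorem theorem3p11 (w : seq letter) (hw : all valid_letter w) :
  (exists (T : finType) (lt : rel T),
     [/\ strict_order lt, 0 < #|T|, free31 lt & skeleton_is lt w]) <->
  ((forall w', word_equiv w w' -> starts_c1_or_t12 w') /\
   (forall w', word_equiv w w' -> ~ has_factor_cici w')).
Proof.
split.
- case=> T [lt [lt_order T_gt0 lt_free [s [s_listing equiv_w]]]].
  have inv : front_letters_ok w /\ cc_separated w.
    apply: (word_equiv_invariants equiv_w).1; split.
    + exact: listing_front_letters_ok.
    + exact: listing_cc_separated.
  have inv' w' : word_equiv w w' -> front_letters_ok w' /\ cc_separated w'.
    by move=> /word_equiv_invariants equiv_w'; apply/equiv_w'.
  split=> w' /inv' [front sep]; [exact: front_letters_ok_starts | exact: cc_separated_no_factor].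
- case=> starts no_cc.
  have front := front_letters_ok_of_starts starts; have sep := cc_separated_of_no_factor no_cc.
  exists ('I_(size w) * 'I_4)%type, (@word_lt w); split.
  + exact: word_lt_order.
  + by case: front => size_w _; rewrite card_prod !card_ord muln_gt0 size_w.
  + exact: word_lt_free.
  + exists (position_listing w); split; first exact: position_listing_compatible.
    by rewrite (position_listing_word hw front); apply: rst_refl.
Qed.
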